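(* Let $\Omega$ be a set system on a set $E$ of size $m$, and let $k$ be a positive integer. Then, as polynomials in $q$, $$R_{k\Omega}(q)=\big((1-q)^k+kq(1-q)^{k-1}\big)^m\,R_\Omega\!\left(\frac{kq}{1+(k-1)q}\right).$$
   Context: A set system $\Omega$ on a finite set $E$ is a collection of subsets of $E$ (its faces). Its reliability function $R_\Omega(q)$ is the probability that, when each element of $E$ is selected independently with probability $q$, the set of selected elements is a face. Equivalently, $R_\Omega(q)=\sum_i f_iq^i(1-q)^{|E|-i}$, where $f_i$ is the number of faces of size $i$. For a positive integer $k$, $k\Omega$ is the set system on $E\times\{1,\ldots,k\}$ in which $\{(e_1,i_1),\ldots,(e_r,i_r)\}$ is a face if and only if $e_1,\ldots,e_r$ are pairwise distinct and $\{e_1,\ldots,e_r\}\in\Omega$. *)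

From HB Require Import structures.
From mathcomp Require Import all_boot all_order all_algebra.
Set Implicit Arguments. Unset Strict Implicit. Unset Printing Implicit Defensive.
Import Order.TTheory GRing.Theory Num.Theory.
Local Open Scope ring_scope.

Definition reliability (R : nzRingType) (E : finType) (Om : {set {set E}}) : {poly R} :=
  \sum_(S in Om) 'X ^+ #|S| * (1 - 'X) ^+ (#|E| - #|S|)%N.

(* k Om : set system on E x {1..k} (here E * 'I_k); a set F is a face iff its
   first coordinates are pairwise distinct and form a face of Om. *)
Definition kfold (E : finType) (k : nat) (Om : {set {set E}}) : {set {set (E * 'I_k)}} :=
  [set F : {set (E * 'I_k)} |
     [forall x in F, forall y in F, (x.1 == y.1) ==> (x == y)]
     && ((fun p : E * 'I_k => p.1) @: F \in Om)].

From HB Require Import structures.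
From mathcomp Require Import all_boot all_order all_algebra.
From mathcomp Require Import ring zify.
Set Implicit Arguments. Unset Strict Implicit.
Import Order.TTheory GRing.Theory Num.Theory.
Local Open Scope ring_scope.

(* A face of k Om is a set F of pairs whose first projection is injective on F
   with image a face S of Om; such F are the graphs of the maps S -> 'I_k, so
   there are k ^ |S| of them, each of size |S|, and
     R_(k Om)(q) = sum_(S in Om) k ^ |S| q ^ |S| (1 - q) ^ (k m - |S|).
   With d = 1 + (k - 1) q and x = k q / d one has 1 - x = (1 - q) / d and
   (1 - q) ^ k + k q (1 - q) ^ (k - 1) = (1 - q) ^ (k - 1) d, which turns each
   term of the right-hand side into the matching term above. *)

Section Lifts.

Variables (E : finType) (k : nat).

Definition lifts (S : {set E}) : {set {set E * 'I_k}} :=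
  [set F : {set E * 'I_k} |
     [forall x in F, forall y in F, (x.1 == y.1) ==> (x == y)] & fst @: F == S].

Definition partial_graph (g : {ffun E -> option 'I_k}) : {set E * 'I_k} :=
  [set p | g p.1 == Some p.2].

Lemma fst_injP (F : {set E * 'I_k}) :
  reflect {in F &, injective fst}
          [forall x in F, forall y in F, (x.1 == y.1) ==> (x == y)].
Proof.
apply: (iffP forall_inP) => [H x y xF yF e | H x xF].
  by move/forall_inP: (H x xF) => /(_ y yF)/implyP/(_ (introT eqP e))/eqP.
by apply/forall_inP => y yF; apply/implyP => /eqP e; apply/eqP; exact: H.
Qed.

Lemma card_lift (S : {set E}) (F : {set E * 'I_k}) :
  F \in lifts S -> #|F| = #|S|.
Proof. by rewrite inE => /andP[/fst_injP/card_in_imset <- /eqP ->]. Qed.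

Lemma partial_graph_inj : injective partial_graph.
Proof.
move=> g h gh; apply/ffunP => e.
have graphE f i : ((e, i) \in partial_graph f) = (f e == Some i) by rewrite inE.
have sameE i : (g e == Some i) = (h e == Some i) by rewrite -!graphE gh.
case: (g e) (h e) sameE => [i|] [j|] sameE //.
- by move: (sameE i); rewrite eqxx => /esym/eqP ->.
- by have := sameE i; rewrite eqxx.
- by have := sameE j; rewrite eqxx.
Qed.

Lemma lifts_partial_graph (S : {set E}) :
  lifts S = partial_graph @: pffun_on None S (predC1 None).
Proof.
apply/setP => F; rewrite inE; apply/andP/imsetP => [[/fst_injP Finj /eqP FS] | ].
  pose g := [ffun e => [pick i | (e, i) \in F]].
  have gE e i : (g e == Some i) = ((e, i) \in F).
    rewrite ffunE; case: pickP => [j Fj | noF]; last by rewrite noF.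
    apply/eqP/idP => [[<-] // | Fi]; congr Some.
    by have [] := Finj (e, j) (e, i) Fj Fi erefl.
  exists g; last by apply/setP => -[e i]; rewrite inE gE.
  apply/pfamilyP; split.
    apply/subsetP => e; rewrite inE -FS; case ge: (g e) => [i|] // _.
    by apply/imsetP; exists (e, i); rewrite -?gE ?ge.
  move=> e; rewrite -FS => /imsetP[[e' i] Fi /= ->].
  by move: Fi; rewrite -gE => /eqP ->.
move=> [g /pfamilyP[gsupp gval] ->]; split.
  apply/fst_injP => -[e i] [e' j]; rewrite !inE /= => /eqP gi /eqP gj /= ee.
  by move: gj; rewrite -ee gi => -[->].
apply/eqP/setP => e; apply/imsetP/idP => [[[e' i]] | eS].
  by rewrite inE /= => /eqP gi ->; apply: (subsetP gsupp); rewrite inE gi.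
by case ge: (g e) (gval e eS) => [i|] // _; exists (e, i); rewrite ?inE ?ge.
Qed.

Lemma card_lifts (S : {set E}) : #|lifts S| = (k ^ #|S|)%N.
Proof.
rewrite lifts_partial_graph card_imset; last exact: partial_graph_inj.
by rewrite card_pffun_on cardC1 card_option card_ord.
Qed.

End Lifts.

Lemma reliability_kfold (R : nzRingType) (E : finType) (k : nat)
    (Om : {set {set E}}) :
  reliability R (kfold k Om) =
  \sum_(S in Om) 'X ^+ #|S| * (1 - 'X) ^+ (#|E| * k - #|S|) *+ (k ^ #|S|).
Proof.
rewrite /reliability (partition_big (fun F : {set E * 'I_k} => fst @: F) (mem Om));
  last by move=> F; rewrite inE => /andP[].
apply: eq_bigr => S SOm; rewrite -card_lifts -sumr_const; symmetry.
apply: eq_big => [F | F /card_lift ->]; last by rewrite card_prod card_ord.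
rewrite /lifts /kfold !inE.
by case: eqP => [-> | _]; rewrite ?(SOm : S \in Om) ?andbT ?andbF.
Qed.

Lemma kfold_weight (R : comPzRingType) (k : nat) (q : R) : (0 < k)%N ->
  (1 - q) ^+ k + k%:R * q * (1 - q) ^+ (k - 1) =
  (1 - q) ^+ (k - 1) * (1 + (k%:R - 1) * q).
Proof. by case: k => // k _; rewrite subSS subn0 exprS -natr1; ring. Qed.

Lemma one_sub_kfold_arg (F : fieldType) (k : nat) (q : F) :
  1 + (k%:R - 1) * q != 0 ->
  1 - k%:R * q / (1 + (k%:R - 1) * q) = (1 - q) / (1 + (k%:R - 1) * q).
Proof. by move=> d_neq0; field. Qed.

Lemma kfold_face_term (F : fieldType) (k m s : nat) (q : F) :
  (0 < k)%N -> (s <= m)%N -> 1 + (k%:R - 1) * q != 0 ->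
  q ^+ s * (1 - q) ^+ (m * k - s) *+ (k ^ s) =
  ((1 - q) ^+ k + k%:R * q * (1 - q) ^+ (k - 1)) ^+ m *
  (k%:R * q / (1 + (k%:R - 1) * q)) ^+ s *
  (1 - k%:R * q / (1 + (k%:R - 1) * q)) ^+ (m - s).
Proof.
move=> k_gt0 sm d_neq0; rewrite kfold_weight // one_sub_kfold_arg //.
set d := 1 + _ in d_neq0 *.
have -> : (m * k - s = (k - 1) * m + (m - s))%N by nia.
have dE : d ^+ m = d ^+ s * d ^+ (m - s) by rewrite -exprD subnKC.
rewrite exprMn dE exprD exprM !expr_div_n exprMn -mulr_natr natrX.
by field; rewrite !expf_neq0.
Qed.

Theorem lemma6p1 (R : realFieldType) (E : finType) (Om : {set {set E}})
    (m k : nat) (hm : #|E| = m) (hk : (0 < k)%N) (q : R)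
    (hq : 1 + (k%:R - 1) * q != 0) :
  (reliability R (kfold k Om)).[q] =
  ((1 - q) ^+ k + k%:R * q * (1 - q) ^+ (k - 1)) ^+ m *
  (reliability R Om).[k%:R * q / (1 + (k%:R - 1) * q)].
Proof.
rewrite reliability_kfold /reliability !horner_sum mulr_sumr hm.
apply: eq_bigr => S _; rewrite hornerMn !hornerE kfold_face_term //.
by rewrite -hm; apply: max_card.
Qed.
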